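(* Let $K$ be a skew field with center $P$ and an involution, $\mathcal C$ a linear category over $P$ with involution, $A$ and $B$ selfadjoint representations of $\mathcal C$ over $K$, and $f=f^\circ\in\operatorname{Aut}(A)$, $g=g^\circ\in\operatorname{Aut}(B)$. Then $A^f$ is congruent to $B^g$ if and only if $g=h^\circ fh$ for some isomorphism $h:B\to A$.
   Context: $K$ has an involution $a\mapsto\bar a$. A linear category over $P$ has $P$-vector-space Hom sets and bilinear composition; an involution on it: $u\mapsto u^*$, $(\alpha:u\to v)\mapsto(\alpha^*:v^*\to u^* )$, $u^{**}=u\ne u^*$, $\alpha^{**}=\alpha$, $(\alpha\beta)^*=\beta^*\alpha^*$, $(\alpha a)^*=\alpha^*\bar a$. Representations: functors to finite-dimensional right $K$-spaces, finite total dimension, preserving $P$-linear combinations; morphisms: natural transformations. $V^*$: semilinear forms ($\varphi(xa)=\bar a\varphi(x)$), $A^*\varphi=\varphi A$, $V^{**}=V$. $A^\circ_u=(A_{u^*})^*$, $A^\circ_\alpha=(A_{\alpha^*})^*$, $f^\circ_u=(f_{u^*})^*$. Selfadjoint: $A=A^\circ$; congruence: isomorphism $\varphi$ of selfadjoint representations with $\varphi^\circ=\varphi^{-1}$. Fix a partition of the objects into $S_0$ and $S_0^*$. For selfadjoint $A$ and automorphism $f=f^\circ$ of $A$: $\tilde f_v=f_v$, $\tilde f_{v^*}=1$ for $v\in S_0$, and $A^f$ is the selfadjoint representation with $A^f_v=A_v$ for all objects $v$ and $A^f_\alpha=\tilde f_v^{-1}A_\alpha\tilde f_u$ for $\alpha:u\to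 v$. *)

From Stdlib Require Import List.
From HB Require Import structures.
From mathcomp Require Import all_boot all_order all_algebra.
Set Implicit Arguments. Unset Strict Implicit. Unset Printing Implicit Defensive.
Import GRing.Theory.
Local Open Scope ring_scope.

Definition is_skew_field (K : unitRingType) := forall x : K, x != 0 -> x \is a GRing.unit.

Definition is_ring_involution (K : unitRingType) (conj : K -> K) :=
  [/\ forall a b, conj (a + b) = conj a + conj b,
      forall a b, conj (a * b) = conj b * conj a
    & forall a, conj (conj a) = a].

Definition is_center_embedding (P : fieldType) (K : unitRingType)
    (iota : {rmorphism P -> K}) :=
  forall x : K, (forall y : K, x * y = y * x) <-> exists a : P, x = iota a.

(* A linear category over P with involution (pconj = the involution of K restricted to P). *)
Record linCatInv (P : fieldType) (pconj : P -> P) := LinCatInv {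
  Obj : Type;
  Hom : Obj -> Obj -> lmodType P;
  comp : forall u v w, Hom v w -> Hom u v -> Hom u w;
  idm : forall u, Hom u u;
  compA : forall u v w x (al : Hom w x) (be : Hom v w) (ga : Hom u v),
      comp al (comp be ga) = comp (comp al be) ga;
  comp1m : forall u v (al : Hom u v), comp (idm v) al = al;
  compm1 : forall u v (al : Hom u v), comp al (idm u) = al;
  compDl : forall u v w (a : P) (al be : Hom v w) (ga : Hom u v),
      comp (a *: al + be) ga = a *: comp al ga + comp be ga;
  compDr : forall u v w (a : P) (al : Hom v w) (be ga : Hom u v),
      comp al (a *: be + ga) = a *: comp al be + comp al ga;
  ostar : Obj -> Obj;
  ostarK : forall u, ostar (ostar u) = u;
  ostar_neq : forall u, ostar u <> u;
  mstar : forall u v, Hom u v -> Hom (ostar v) (ostar u);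
  mstarK : forall u v (al : Hom u v),
      existT (fun p : Obj * Obj => (Hom p.1 p.2 : Type)) (ostar (ostar u), ostar (ostar v))
        (mstar (mstar al))
      = existT (fun p : Obj * Obj => (Hom p.1 p.2 : Type)) (u, v) al;
  mstarM : forall u v w (al : Hom v w) (be : Hom u v),
      mstar (comp al be) = comp (mstar be) (mstar al);
  mstar_semilinear : forall u v (a : P) (al be : Hom u v),
      mstar (a *: al + be) = pconj a *: mstar al + mstar be
}.


Arguments Hom {P pconj} l _ _.
Arguments idm {P pconj} l _.
Arguments ostar {P pconj} l _.

Section Reps.
Variables (K : unitRingType) (P : fieldType) (pconj : P -> P) (C : linCatInv pconj).

(* Representation data: the space at u is the right K-space K^(rdim u) of columns,
   K-linear maps are matrices acting on the left. *)
Record prep := Prep {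
  rdim : Obj C -> nat;
  rmap : forall u v, Hom C u v -> 'M[K]_(rdim v, rdim u)
}.

Definition is_rep (iota : {rmorphism P -> K}) (A : prep) :=
  [/\ (forall u v w (al : Hom C v w) (be : Hom C u v),
         rmap A (comp al be) = rmap A al *m rmap A be),
      (forall u, rmap A (idm C u) = 1%:M),
      (forall u v (a : P) (al be : Hom C u v),
         rmap A (a *: al + be) = iota a *: rmap A al + rmap A be)
    & exists s : list (Obj C), forall u, rdim A u <> 0%N -> In u s].

Variable conj : K -> K.

(* Matrix of A^* : W^* -> V^* for A : V -> W, in the dual coordinates
   (a semilinear form x |-> sum_i conj(x_i) c_i is identified with c). *)
Definition mxstar m n (M : 'M[K]_(m, n)) : 'M[K]_(n, m) := map_mx conj M^T.

Definition mxheq m n p q (M : 'M[K]_(m, n)) (N : 'M[K]_(p, q)) :=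
  exists e : (m = p) * (n = q), castmx e M = N.

Definition is_natural (A B : prep) (phi : forall u, 'M[K]_(rdim B u, rdim A u)) :=
  forall u v (al : Hom C u v), phi v *m rmap A al = rmap B al *m phi u.

Definition is_inverse_nat (A B : prep) (phi : forall u, 'M[K]_(rdim B u, rdim A u))
    (psi : forall u, 'M[K]_(rdim A u, rdim B u)) :=
  forall u, phi u *m psi u = 1%:M /\ psi u *m phi u = 1%:M.

(* psi = phi^o, where phi^o_u = (phi_{u^*})^* (under A = A^o, B = B^o). *)
Definition is_circ (A B : prep) (phi : forall u, 'M[K]_(rdim B u, rdim A u))
    (psi : forall u, 'M[K]_(rdim A u, rdim B u)) :=
  forall u, mxheq (mxstar (phi (ostar C u))) (psi u).

Definition selfadjoint (A : prep) :=
  (forall u, rdim A (ostar C u) = rdim A u) /\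
  forall u v (al : Hom C u v), mxheq (mxstar (rmap A (mstar al))) (rmap A al).

Definition congruent (A B : prep) :=
  exists (phi : forall u, 'M[K]_(rdim B u, rdim A u)) (psi : forall u, 'M[K]_(rdim A u, rdim B u)),
    [/\ is_natural phi, is_inverse_nat phi psi & is_circ phi psi].

Definition is_partition (S0 : pred (Obj C)) := forall u, S0 (ostar C u) = ~~ S0 u.

Definition twist (S0 : pred (Obj C)) (A : prep) (f finv : forall u, 'M[K]_(rdim A u)) : prep :=
  @Prep (rdim A) (fun u v al =>
    (if S0 v then finv v else 1%:M) *m rmap A al *m (if S0 u then f u else 1%:M)).

End Reps.

(* Write [x~] for the family equal to [x] on [S0] and to [1] off it, and [x^] for the
   complementary one ([fam_on S0 x] and [fam_on (predC S0) x] below), so that [x = x~ x^]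
   and [x~ : A^x -> A] is an isomorphism by the very definition of [A^x].  When [x = x^o],
   the partition property gives [(x~)^o = x^].
   For an isomorphism [phi : A^f -> B^g] put [h := (f^)^-1 phi^-1 g^ : B -> A]; then
   [h^o f h = g~ (phi^-1)^o (f~)^-1 f (f^)^-1 phi^-1 g^ = g~ (phi^-1)^o phi^-1 g^], which
   equals [g = g~ g^] exactly when [phi^o = phi^-1].  Conversely [phi := (g~)^-1 h^o f~] is a
   congruence whenever [g = h^o f h]. *)

From HB Require Import structures.
From mathcomp Require Import all_boot all_order all_algebra.
Set Implicit Arguments. Unset Strict Implicit. Unset Printing Implicit Defensive.
Import GRing.Theory.
Local Open Scope ring_scope.

Section MatrixStar.
Variable K : unitRingType.

Lemma mxheq_refl m n (M : 'M[K]_(m, n)) : mxheq M M.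
Proof. by exists (erefl, erefl); rewrite castmx_id. Qed.

Lemma mxheq_sym m n p q (M : 'M[K]_(m, n)) (N : 'M[K]_(p, q)) :
  mxheq M N -> mxheq N M.
Proof. by case=> [[e1 e2]] <-; subst; rewrite castmx_id; apply: mxheq_refl. Qed.

Lemma mxheq_trans m n p q r s (M : 'M[K]_(m, n)) (N : 'M[K]_(p, q)) (L : 'M[K]_(r, s)) :
  mxheq M N -> mxheq N L -> mxheq M L.
Proof. by case=> [[e1 e2]] <-; subst; rewrite castmx_id. Qed.

Lemma mxheq_mul m n p m' n' p' (M : 'M[K]_(m, n)) (N : 'M[K]_(n, p))
    (M' : 'M[K]_(m', n')) (N' : 'M[K]_(n', p')) :
  mxheq M M' -> mxheq N N' -> mxheq (M *m N) (M' *m N').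
Proof.
case=> [[e1 e2]] <-; subst; rewrite castmx_id.
by case=> [[e1 e2]] <-; subst; rewrite castmx_id; apply: mxheq_refl.
Qed.

Lemma mxheq_inv m n p q (M : 'M[K]_(m, n)) (N : 'M[K]_(n, m))
    (M' : 'M[K]_(p, q)) (N' : 'M[K]_(q, p)) :
  mxheq M M' -> N *m M = 1%:M -> M' *m N' = 1%:M -> mxheq N N'.
Proof.
case=> [[e1 e2]] <-; subst; rewrite castmx_id => NM MN.
by rewrite -[N']mul1mx -NM -mulmxA MN mulmx1; apply: mxheq_refl.
Qed.

Lemma mxheq1 m n : m = n -> mxheq (1%:M : 'M[K]_m) (1%:M : 'M[K]_n).
Proof. by move->; apply: mxheq_refl. Qed.

Lemma mulmx_cancel m n p (M : 'M[K]_(m, n)) (X : 'M[K]_(n, p)) (Y : 'M[K]_(p, n)) :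
  X *m Y = 1%:M -> M *m X *m Y = M.
Proof. by move=> XY; rewrite -mulmxA XY mulmx1. Qed.

Variable conj : K -> K.
Hypothesis conj_invol : is_ring_involution conj.

Let conjD a b : conj (a + b) = conj a + conj b. Proof. by case: conj_invol. Qed.
Let conjM a b : conj (a * b) = conj b * conj a. Proof. by case: conj_invol. Qed.
Let conjK a : conj (conj a) = a. Proof. by case: conj_invol. Qed.

Let conj0 : conj 0 = 0.
Proof. by apply: (@addrI _ (conj 0)); rewrite -conjD !addr0. Qed.

Let conj1 : conj 1 = 1.
Proof.
have conj1M y : conj 1 * y = y by rewrite -[y]conjK -conjM mulr1.
by rewrite -[conj 1]mulr1 conj1M.
Qed.

Lemma mxstarM m n p (M : 'M[K]_(m, n)) (N : 'M[K]_(n, p)) :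
  mxstar conj (M *m N) = mxstar conj N *m mxstar conj M.
Proof.
apply/matrixP=> i k; rewrite !mxE (big_morph conj conjD conj0).
by apply: eq_bigr => j _; rewrite !mxE conjM.
Qed.

Lemma mxstar1 n : mxstar conj (1%:M : 'M[K]_n) = 1%:M.
Proof. by apply/matrixP=> i j; rewrite !mxE eq_sym; case: (_ == _); rewrite ?conj1 ?conj0. Qed.

Lemma mxstarK m n (M : 'M[K]_(m, n)) : mxstar conj (mxstar conj M) = M.
Proof. by apply/matrixP=> i j; rewrite !mxE conjK. Qed.

Lemma mxheq_star m n p q (M : 'M[K]_(m, n)) (N : 'M[K]_(p, q)) :
  mxheq M N -> mxheq (mxstar conj M) (mxstar conj N).
Proof. by case=> [[e1 e2]] <-; subst; rewrite castmx_id; apply: mxheq_refl. Qed.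

End MatrixStar.

Section NaturalFamilies.
Variables (K : unitRingType) (P : fieldType) (pconj : P -> P) (C : linCatInv pconj).
Implicit Types A B D X : prep K C.

Lemma natural_comp A B D (p : forall u, 'M[K]_(rdim B u, rdim A u))
    (q : forall u, 'M[K]_(rdim D u, rdim B u)) :
  is_natural p -> is_natural q -> is_natural (fun u => q u *m p u).
Proof. by move=> np nq u v al; rewrite -mulmxA np !mulmxA nq. Qed.

Lemma natural_inv A B (p : forall u, 'M[K]_(rdim B u, rdim A u))
    (p' : forall u, 'M[K]_(rdim A u, rdim B u)) :
  is_natural p -> is_inverse_nat p p' -> is_natural p'.
Proof.
move=> np ip u v al; have [pp'u _] := ip u; have [_ p'pv] := ip v.
by rewrite -[LHS]mulmx1 -pp'u mulmxA -(mulmxA (p' v)) -np mulmxA p'pv mul1mx.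
Qed.

Lemma inverse_nat_sym A B (p : forall u, 'M[K]_(rdim B u, rdim A u))
    (p' : forall u, 'M[K]_(rdim A u, rdim B u)) :
  is_inverse_nat p p' -> is_inverse_nat p' p.
Proof. by move=> ip u; have [] := ip u. Qed.

Lemma inverse_nat_comp A B D (p : forall u, 'M[K]_(rdim B u, rdim A u))
    (p' : forall u, 'M[K]_(rdim A u, rdim B u))
    (q : forall u, 'M[K]_(rdim D u, rdim B u)) (q' : forall u, 'M[K]_(rdim B u, rdim D u)) :
  is_inverse_nat p p' -> is_inverse_nat q q' ->
  is_inverse_nat (fun u => q u *m p u) (fun u => p' u *m q' u).
Proof.
move=> ip iq u; have [pp' p'p] := ip u; have [qq' q'q] := iq u.
by rewrite !mulmxA !mulmx_cancel.
Qed.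

Definition fam_on (S : pred (Obj C)) X (x : forall u, 'M[K]_(rdim X u)) u : 'M[K]_(rdim X u) :=
  if S u then x u else 1%:M.

Variables (S : pred (Obj C)) (X : prep K C) (x xi : forall u, 'M[K]_(rdim X u)).

Lemma fam_on_inverse : is_inverse_nat x xi -> is_inverse_nat (fam_on S x) (fam_on S xi).
Proof. by rewrite /fam_on => ix u; case: (S u) (ix u); rewrite ?mul1mx. Qed.

Lemma fam_on_split u : fam_on S x u *m fam_on (predC S) x u = x u.
Proof. by rewrite /fam_on /=; case: (S u); rewrite ?mul1mx ?mulmx1. Qed.

Lemma fam_on_split_compl u : fam_on (predC S) x u *m fam_on S x u = x u.
Proof. by rewrite /fam_on /=; case: (S u); rewrite ?mul1mx ?mulmx1. Qed.

Hypothesis ix : is_inverse_nat x xi.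

Lemma twist_natural : is_natural (A := twist S x xi) (B := X) (fam_on S x).
Proof.
move=> u v al /=; rewrite /fam_on; case: (S v); rewrite ?mul1mx //.
by rewrite !mulmxA (proj1 (ix v)) mul1mx.
Qed.

Lemma twist_natural_compl :
  is_natural x -> is_natural (A := X) (B := twist S x xi) (fam_on (predC S) x).
Proof.
move=> nx; have xhat u : fam_on (predC S) x u = fam_on S xi u *m x u.
  by rewrite /fam_on /=; case: (S u); rewrite ?mul1mx // (proj2 (ix u)).
move=> u v al; rewrite !xhat.
exact: natural_comp nx (natural_inv twist_natural (fam_on_inverse ix)) u v al.
Qed.

End NaturalFamilies.

Section Circ.
Variables (K : unitRingType) (conj : K -> K) (P : fieldType) (pconj : P -> P)
  (C : linCatInv pconj).
Hypothesis conj_invol : is_ring_involution conj.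
Implicit Types A B D X : prep K C.

Lemma circ_sym A B (p : forall u, 'M[K]_(rdim B u, rdim A u))
    (q : forall u, 'M[K]_(rdim A u, rdim B u)) :
  is_circ conj p q -> is_circ conj q p.
Proof.
move=> cpq u; have := mxheq_star conj (cpq (ostar C u)).
rewrite mxstarK // => /mxheq_sym /mxheq_trans; apply.
by rewrite ostarK; apply: mxheq_refl.
Qed.

Lemma circ_comp A B D (p : forall u, 'M[K]_(rdim B u, rdim A u))
    (p' : forall u, 'M[K]_(rdim A u, rdim B u))
    (q : forall u, 'M[K]_(rdim D u, rdim B u)) (q' : forall u, 'M[K]_(rdim B u, rdim D u)) :
  is_circ conj p p' -> is_circ conj q q' ->
  is_circ conj (fun u => q u *m p u) (fun u => p' u *m q' u).
Proof. by move=> cp cq u; rewrite mxstarM //; apply: mxheq_mul. Qed.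

Lemma circ_inv A B (p : forall u, 'M[K]_(rdim B u, rdim A u))
    (p' pinv : forall u, 'M[K]_(rdim A u, rdim B u))
    (p'inv : forall u, 'M[K]_(rdim B u, rdim A u)) :
  is_circ conj p p' -> is_inverse_nat p pinv -> is_inverse_nat p' p'inv ->
  is_circ conj pinv p'inv.
Proof.
move=> cp ip ip' u; apply: mxheq_inv (cp u) _ (proj1 (ip' u)).
by rewrite -mxstarM // (proj1 (ip _)) mxstar1.
Qed.

Lemma circ_fam_on (S : pred (Obj C)) X (x : forall u, 'M[K]_(rdim X u)) :
  is_partition S -> is_circ conj x x -> is_circ conj (fam_on S x) (fam_on (predC S) x).
Proof.
move=> partS cx u; rewrite /fam_on /= partS.
case: (S u) => //=; rewrite mxstar1 //.
by case: (cx u) => -[dim_ostar _] _; apply: mxheq1.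
Qed.

End Circ.

Section TwistCongruence.
Variables (K : unitRingType) (conj : K -> K) (P : fieldType) (pconj : P -> P)
  (C : linCatInv pconj) (S0 : pred (Obj C)) (A B : prep K C)
  (f finv : forall u, 'M[K]_(rdim A u)) (g ginv : forall u, 'M[K]_(rdim B u)).
Hypotheses (conj_invol : is_ring_involution conj) (partS0 : is_partition S0).
Hypotheses (nat_f : is_natural f) (inv_f : is_inverse_nat f finv) (circ_f : is_circ conj f f).
Hypotheses (nat_g : is_natural g) (inv_g : is_inverse_nat g ginv) (circ_g : is_circ conj g g).

Let circ_ftilde := circ_fam_on conj_invol partS0 circ_f.
Let circ_gtilde := circ_fam_on conj_invol partS0 circ_g.

Lemma congruent_twist_factor :
  congruent conj (twist S0 f finv) (twist S0 g ginv) ->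
  exists (h : forall u, 'M[K]_(rdim A u, rdim B u))
         (hinv : forall u, 'M[K]_(rdim B u, rdim A u))
         (hc : forall u, 'M[K]_(rdim B u, rdim A u)),
    [/\ is_natural h, is_inverse_nat h hinv, is_circ conj h hc
      & forall u, g u = hc u *m f u *m h u].
Proof.
case=> phi [psi [nat_phi inv_phi circ_phi]].
have inv_fhat := fam_on_inverse (predC S0) inv_f.
have inv_ghat := fam_on_inverse (predC S0) inv_g.
have inv_ftilde := fam_on_inverse S0 inv_f.
exists (fun u => fam_on (predC S0) finv u *m psi u *m fam_on (predC S0) g u).
exists (fun u => fam_on (predC S0) ginv u *m (phi u *m fam_on (predC S0) f u)).
exists (fun u => fam_on S0 g u *m (phi u *m fam_on S0 finv u)).
split.
- have nat_fhatinv := natural_inv (twist_natural_compl S0 inv_f nat_f) inv_fhat.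
  have nat_ghat := twist_natural_compl S0 inv_g nat_g.
  have nat_psi := natural_inv nat_phi inv_phi.
  exact: natural_comp nat_ghat (natural_comp nat_psi nat_fhatinv).
- exact: inverse_nat_comp inv_ghat
    (inverse_nat_comp (inverse_nat_sym inv_phi) (inverse_nat_sym inv_fhat)).
- have circ_fhatinv :=
    circ_inv conj_invol (circ_sym conj_invol circ_ftilde) inv_fhat inv_ftilde.
  exact (circ_comp conj_invol (circ_sym conj_invol circ_gtilde)
    (circ_comp conj_invol (circ_sym conj_invol circ_phi) circ_fhatinv)).
- move=> u; have [phipsi _] := inv_phi u.
  have [_ ft'ft] := inv_ftilde u; have [fhfh' _] := inv_fhat u.
  rewrite -{1}(fam_on_split S0 g u) -(fam_on_split S0 f u) !mulmxA.
  by rewrite (mulmx_cancel _ ft'ft) (mulmx_cancel _ fhfh') (mulmx_cancel _ phipsi).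
Qed.

Lemma factor_congruent_twist :
  (exists (h : forall u, 'M[K]_(rdim A u, rdim B u))
          (hinv : forall u, 'M[K]_(rdim B u, rdim A u))
          (hc : forall u, 'M[K]_(rdim B u, rdim A u)),
     [/\ is_natural h, is_inverse_nat h hinv, is_circ conj h hc
       & forall u, g u = hc u *m f u *m h u]) ->
  congruent conj (twist S0 f finv) (twist S0 g ginv).
Proof.
case=> h [hinv [hc [nat_h inv_h circ_h gE]]].
have hcE u : hc u = g u *m (hinv u *m finv u).
  by have [hh' _] := inv_h u; have [ff' _] := inv_f u; rewrite gE !mulmxA !mulmx_cancel.
have nat_hc : is_natural hc.
  move=> u v al; rewrite !hcE.
  have nat_hinv := natural_inv nat_h inv_h.
  exact (natural_comp (natural_comp (natural_inv nat_f inv_f) nat_hinv) nat_g al).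
have inv_gtilde := fam_on_inverse S0 inv_g; have inv_ghat := fam_on_inverse (predC S0) inv_g.
have inv_ftilde := fam_on_inverse S0 inv_f; have inv_fhat := fam_on_inverse (predC S0) inv_f.
exists (fun u => fam_on S0 ginv u *m hc u *m fam_on S0 f u).
exists (fun u => fam_on (predC S0) f u *m (h u *m fam_on (predC S0) ginv u)).
split.
- exact: natural_comp (twist_natural S0 inv_f)
    (natural_comp nat_hc (natural_inv (twist_natural S0 inv_g) inv_gtilde)).
- move=> u; rewrite hcE -(fam_on_split S0 g u) -(fam_on_split_compl S0 finv u) !mulmxA.
  have [_ gt'gt] := inv_gtilde u; have [ghgh' gh'gh] := inv_ghat u.
  have [_ ft'ft] := inv_ftilde u; have [fhfh' fh'fh] := inv_fhat u.
  have [hh' h'h] := inv_h u.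
  split.
  + by rewrite (mulmx_cancel _ ft'ft) (mulmx_cancel _ fh'fh) (mulmx_cancel _ h'h)
               (mulmx_cancel _ ghgh').
  + by rewrite (mulmx_cancel _ gt'gt) (mulmx_cancel _ gh'gh) (mulmx_cancel _ hh')
               (mulmx_cancel _ ft'ft).
- have circ_gtildeinv := circ_inv conj_invol circ_gtilde inv_gtilde inv_ghat.
  exact (circ_comp conj_invol circ_ftilde
    (circ_comp conj_invol (circ_sym conj_invol circ_h) circ_gtildeinv)).
Qed.

End TwistCongruence.

Theorem lemma3 (K : unitRingType) (conj : K -> K) (P : fieldType)
    (iota : {rmorphism P -> K}) (pconj : P -> P) (C : linCatInv pconj)
    (S0 : pred (Obj C)) (A B : prep K C)
    (f finv : forall u, 'M[K]_(rdim A u)) (g ginv : forall u, 'M[K]_(rdim B u)) :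
  is_skew_field K -> is_ring_involution conj -> is_center_embedding iota ->
  (forall a : P, iota (pconj a) = conj (iota a)) ->
  is_partition S0 ->
  is_rep iota A -> is_rep iota B -> selfadjoint conj A -> selfadjoint conj B ->
  is_natural f -> is_inverse_nat f finv -> is_circ conj f f ->
  is_natural g -> is_inverse_nat g ginv -> is_circ conj g g ->
  (congruent conj (twist S0 f finv) (twist S0 g ginv) <->
   exists (h : forall u, 'M[K]_(rdim A u, rdim B u))
          (hinv : forall u, 'M[K]_(rdim B u, rdim A u))
          (hc : forall u, 'M[K]_(rdim B u, rdim A u)),
     [/\ is_natural h, is_inverse_nat h hinv, is_circ conj h hc
       & forall u, g u = hc u *m f u *m h u]).
Proof.
move=> _ conj_invol _ _ partS0 _ _ _ _ nat_f inv_f circ_f nat_g inv_g circ_g; split.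
- exact: congruent_twist_factor.
- exact: factor_congruent_twist.
Qed.
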